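(* For every weak independence relation $\diamond$ on the analysis instance $\mathcal{D}$, and every sequence of transformers $\sigma\in\mathrm{runs}(\mathcal{D})$, there is a unique configuration $C$ of $\mathcal{U}_{\mathcal{D},\diamond}$ such that $\sigma\in\mathrm{inter}(C)$.
   Context: An analysis instance $\mathcal{D}=\langle D,\sqsubseteq,F,d_0\rangle$ consists of a lattice $\langle D,\sqsubseteq,\sqcup,\sqcap\rangle$ with least element $\bot$, a set $F$ of monotone, bottom-strict transformers, and an initial element $d_0$. A transformer $f$ is enabled at $d$ if $f(d)\neq\bot$. For $\sigma=f_1\ldots f_m$, $\mathrm{state}(\sigma)=(f_m\circ\cdots\circ f_1)(d_0)$; $\sigma$ is a run if $\mathrm{state}(\sigma)\neq\bot$ and $\mathrm{runs}(\mathcal{D})$ is the set of runs; $\mathrm{reach}(\mathcal{D})$ is the set of reachable elements. A relation $\diamond\subseteq F\times F$ is a weak independence if it is symmetric, irreflexive, and $f\diamond f'$ implies $f(f'(d))=f'(f(d))$ for every $d\in\mathrm{reach}(\mathcal{D})$. A labelled prime event structure (PES) is $\langle E,<,\#,h\rangle$ with $<$ a strict partial order with finite down-sets, $\#$ a symmetric irreflexive conflict relation inherited along $<$, and a labelling $h$. A configuration is a finite causally closed, conflict-free set of events. The interleavings $\mathrm{inter}(C)$ are the label sequences of the linearizations of $C$ respecting $<$. The state of $C$, $\mathrm{state}(C)$, is the greatest lower bound (meet) in $D$ of $\{\mathrm{state}(\sigma)\colon\sigma\in\mathrm{inter}(C)\}$. The unfolding $\mathcal{U}_{\mathcal{D},\diamond}$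 is obtained by starting from the empty PES and repeatedly adding events $e=\langle f,C\rangle$, where $C$ is a configuration, $f$ is enabled at $\mathrm{state}(C)$ and $\neg(f\diamond h(e'))$ for every $<$-maximal $e'\in C$; one sets $e'<e$ for all $e'\in C$, $e'\# e$ for all other events $e'\notin C$ with $\neg(f\diamond h(e'))$, and $h(e)=f$; this is saturated until no new event can be added. *)

From HB Require Import structures.
From Stdlib Require List.
From mathcomp Require Import all_boot order.
Set Implicit Arguments. Unset Strict Implicit. Unset Printing Implicit Defensive.
Import Order.TTheory.
Local Open Scope order_scope.

(* Transformers are given by a type of names F with interpretation app. *)

Definition state {disp : Order.disp_t} {D : bLatticeType disp} {F : Type}
  (app : F -> D -> D) (d0 : D) (s : seq F) : D :=
  foldl (fun d f => app f d) d0 s.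

Definition is_run {disp : Order.disp_t} {D : bLatticeType disp} {F : Type}
  (app : F -> D -> D) (d0 : D) (s : seq F) : Prop :=
  state app d0 s <> \bot.

Definition reach {disp : Order.disp_t} {D : bLatticeType disp} {F : Type}
  (app : F -> D -> D) (d0 : D) (d : D) : Prop :=
  exists s, is_run app d0 s /\ state app d0 s = d.

Definition monotone_transformers {disp : Order.disp_t} {D : bLatticeType disp}
  {F : Type} (app : F -> D -> D) : Prop :=
  forall f (x y : D), x <= y -> app f x <= app f y.

Definition bottom_strict {disp : Order.disp_t} {D : bLatticeType disp}
  {F : Type} (app : F -> D -> D) : Prop :=
  forall f, app f \bot = \bot.

Definition weak_independence {disp : Order.disp_t} {D : bLatticeType disp}
  {F : Type} (app : F -> D -> D) (d0 : D) (indep : F -> F -> Prop) : Prop :=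
  (forall f g, indep f g -> indep g f) /\
  (forall f, ~ indep f f) /\
  (forall f g, indep f g -> forall d, reach app d0 d -> app f (app g d) = app g (app f d)).

Definition is_glb {disp : Order.disp_t} {D : bLatticeType disp}
  (P : D -> Prop) (x : D) : Prop :=
  (forall y, P y -> x <= y) /\ (forall z, (forall y, P y -> z <= y) -> z <= x).

(* An event <f, C> is a label together with its history C (a finite set of
   events, represented by a list); events are compared extensionally with
   ev_eq (same label, same history as sets, recursively). *)
Inductive event (F : Type) : Type := Ev : F -> list (event F) -> event F.

Definition label {F} (e : event F) : F := let: Ev f _ := e in f.
Definition hist {F} (e : event F) : list (event F) := let: Ev _ H := e in H.

Inductive ev_eq {F : Type} : event F -> event F -> Prop :=
| EvEq (f : F) (H H' : list (event F)) :
    (forall x, List.In x H -> exists y, List.In y H' /\ ev_eq x y) ->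
    (forall y, List.In y H' -> exists x, List.In x H /\ ev_eq x y) ->
    ev_eq (Ev f H) (Ev f H').

Definition mem_ev {F} (e : event F) (H : list (event F)) : Prop :=
  exists y, List.In y H /\ ev_eq e y.
Definition incl_ev {F} (H H' : list (event F)) : Prop :=
  forall x, List.In x H -> mem_ev x H'.
Definition same_set {F} (H H' : list (event F)) : Prop :=
  incl_ev H H' /\ incl_ev H' H.

Definition ev_lt {F} (e' e : event F) : Prop := mem_ev e' (hist e).
Definition ev_le {F} (e' e : event F) : Prop := ev_eq e' e \/ ev_lt e' e.

Definition direct_conflict {F} (indep : F -> F -> Prop) (e1 e2 : event F) : Prop :=
  ~ ev_eq e1 e2 /\ ~ ev_lt e1 e2 /\ ~ ev_lt e2 e1 /\ ~ indep (label e1) (label e2).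
Definition conflict {F} (indep : F -> F -> Prop) (e1 e2 : event F) : Prop :=
  exists a b, ev_le a e1 /\ ev_le b e2 /\ direct_conflict indep a b.

Definition causally_closed {F} (C : list (event F)) : Prop :=
  forall e, List.In e C -> incl_ev (hist e) C.
Definition conflict_free {F} (indep : F -> F -> Prop) (C : list (event F)) : Prop :=
  forall e1 e2, List.In e1 C -> List.In e2 C -> ~ conflict indep e1 e2.

Fixpoint lin_ok {F} (pre s : list (event F)) : Prop :=
  match s with
  | nil => True
  | e :: s' => ~ mem_ev e pre /\ incl_ev (hist e) pre /\ lin_ok (pre ++ [:: e]) s'
  end.
Definition inter {F} (C : list (event F)) (sigma : seq F) : Prop :=
  exists s, lin_ok nil s /\ same_set s C /\ map label s = sigma.

Definition is_state_conf {disp : Order.disp_t} {D : bLatticeType disp} {F : Type}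
  (app : F -> D -> D) (d0 : D) (C : list (event F)) (x : D) : Prop :=
  is_glb (fun y => exists sigma, inter C sigma /\ y = state app d0 sigma) x.

Definition maximal_in {F} (e : event F) (C : list (event F)) : Prop :=
  ~ exists e', List.In e' C /\ ev_lt e e'.

(* the event set of the unfolding U_{D,indep} (least saturated set) *)
Inductive in_unf {disp : Order.disp_t} {D : bLatticeType disp} {F : Type}
  (app : F -> D -> D) (d0 : D) (indep : F -> F -> Prop) : event F -> Prop :=
| UnfEv (f : F) (C : list (event F)) :
    (forall e, List.In e C -> in_unf app d0 indep e) ->
    causally_closed C ->
    conflict_free indep C ->
    (exists x, is_state_conf app d0 C x /\ app f x <> \bot) ->
    (forall e, List.In e C -> maximal_in e C -> ~ indep f (label e)) ->
    in_unf app d0 indep (Ev f C).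

Definition configuration {disp : Order.disp_t} {D : bLatticeType disp} {F : Type}
  (app : F -> D -> D) (d0 : D) (indep : F -> F -> Prop) (C : list (event F)) : Prop :=
  (forall e, List.In e C -> in_unf app d0 indep e) /\
  causally_closed C /\ conflict_free indep C.

(* Two linearizations of the same conflict-free set of events differ by swaps of
   adjacent concurrent events; concurrent events of a conflict-free set carry
   independent labels, so all interleavings of a configuration reach the same
   state.  Existence then goes by induction on the run: given a configuration
   linearized as sigma, the event for the next transformer f gets as history the
   causal past of the events that do not commute with f; the other events commute
   with f, so f is enabled at the state of that history.  Conversely, the history
   of the last event e of a linearization P e is forced to be exactly that causal
   past inside P, so configurations sharing an interleaving agree event by event. *)

From HB Require Import structures.
From mathcomp Require Import all_boot order.
From Stdlib Require Import Classical.
From Stdlib Require List.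

Set Implicit Arguments. Unset Strict Implicit. Unset Printing Implicit Defensive.

Lemma exists_max_measure (T : Type) (mu : T -> nat) (Q : T -> Prop) (l : list T) x :
  List.In x l -> Q x ->
  exists2 m, List.In m l /\ Q m & forall y, List.In y l -> Q y -> mu y <= mu m.
Proof.
elim: l x => [|y l IH] x //= Hx Qx.
case: (classic (exists2 x', List.In x' l & Q x')) => [[x' Hx' Qx'] | Nl].
- have [m [Hm Qm] Mm] := IH x' Hx' Qx'.
  case: (classic (Q y /\ mu m <= mu y)) => [[Qy Le] | N].
  + exists y => [|z [<- // | Hz] Qz]; first by split; first left.
    exact: leq_trans (Mm z Hz Qz) Le.
  + exists m => [|z [<- | Hz] Qz]; [by split; first right | | exact: Mm].
    by rewrite leqNgt; apply/negP => Lt; apply: N; split; last exact: ltnW.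
- have Ey : y = x by case: Hx => // Hx; case: Nl; exists x.
  subst y; exists x => [|z [<- // | Hz] Qz]; first by split; first left.
  by case: Nl; exists z.
Qed.

Section Events.

Variable F : Type.
Implicit Types (a b x y z : event F) (H s t u v pre : list (event F)).

Lemma event_ind_nested (P : event F -> Prop) :
  (forall f H, (forall x, List.In x H -> P x) -> P (Ev f H)) -> forall e, P e.
Proof.
move=> IH; fix self 1 => -[f H]; apply: IH.
elim: H => [|y H IHH] x /= []; [move<-; exact: self | exact: IHH].
Qed.

Lemma ev_eq_inv a b : ev_eq a b ->
  [/\ label a = label b, incl_ev (hist a) (hist b) &
       forall y, List.In y (hist b) -> exists x, List.In x (hist a) /\ ev_eq x y].
Proof. by case. Qed.

Lemma ev_eq_intro a b : label a = label b -> incl_ev (hist a) (hist b) ->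
  (forall y, List.In y (hist b) -> exists x, List.In x (hist a) /\ ev_eq x y) ->
  ev_eq a b.
Proof. by case: a b => [f H] [g H'] /= ->; constructor. Qed.

Lemma ev_eq_refl a : ev_eq a a.
Proof.
elim/event_ind_nested: a => f H IH.
by apply: ev_eq_intro => // x Hx; exists x; split=> //; apply: IH.
Qed.

Lemma ev_eq_sym a b : ev_eq a b -> ev_eq b a.
Proof.
elim/event_ind_nested: a b => f H IH b /ev_eq_inv[/= Eab Iab Iba].
apply: ev_eq_intro => //= [x /Iba [y [Hy Eyx]] | y Hy].
- by exists y; split; last exact: IH _ Hy _ Eyx.
- by have [x [Hx Eyx]] := Iab y Hy; exists x; split; last exact: IH _ Hy _ Eyx.
Qed.

Lemma ev_eq_trans a b c : ev_eq a b -> ev_eq b c -> ev_eq a c.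
Proof.
elim/event_ind_nested: a b c => f H IH b c /ev_eq_inv[/= Eab Iab Iba] /ev_eq_inv[Ebc Ibc Icb].
apply: ev_eq_intro; first by rewrite /= Eab.
- move=> x Hx; have [y [/Ibc [z [Hz Eyz]] Exy]] := Iab x Hx.
  by exists z; split; last exact: IH _ Hx _ _ Exy Eyz.
- move=> z /Icb [y [/Iba [x [Hx Exy]] Eyz]].
  by exists x; split; last exact: IH _ Hx _ _ Exy Eyz.
Qed.

Lemma ev_eq_transr x a b : ev_eq a b -> ev_eq x a <-> ev_eq x b.
Proof. by move=> Eab; split=> E; [apply: ev_eq_trans E Eab | apply: ev_eq_trans E (ev_eq_sym Eab)]. Qed.

Lemma ev_eq_label a b : ev_eq a b -> label a = label b.
Proof. by case/ev_eq_inv. Qed.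

Lemma mem_ev_In x H : List.In x H -> mem_ev x H.
Proof. by exists x; split; last exact: ev_eq_refl. Qed.

Lemma mem_ev_eq x y H : ev_eq x y -> mem_ev y H -> mem_ev x H.
Proof. by move=> Exy [z [Hz Eyz]]; exists z; split; last exact: ev_eq_trans Eyz. Qed.

Lemma mem_ev_incl x H H' : mem_ev x H -> incl_ev H H' -> mem_ev x H'.
Proof. by move=> [y [Hy Exy]] /(_ y Hy); apply: mem_ev_eq. Qed.

Lemma incl_ev_refl H : incl_ev H H.
Proof. by move=> x /mem_ev_In. Qed.

Lemma incl_ev_trans H1 H2 H3 : incl_ev H1 H2 -> incl_ev H2 H3 -> incl_ev H1 H3.
Proof. by move=> I12 I23 x /I12 /mem_ev_incl; apply. Qed.

Lemma same_set_refl H : same_set H H.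
Proof. by split; apply: incl_ev_refl. Qed.

Lemma same_set_sym H H' : same_set H H' -> same_set H' H.
Proof. by case. Qed.

Lemma same_set_trans H1 H2 H3 : same_set H1 H2 -> same_set H2 H3 -> same_set H1 H3.
Proof. by move=> [I12 I21] [I23 I32]; split; apply: incl_ev_trans; eassumption. Qed.

Lemma same_setP H H' : same_set H H' <-> forall x, mem_ev x H <-> mem_ev x H'.
Proof.
split=> [[I I'] x | E]; last by split=> x /mem_ev_In /E.
by split=> /mem_ev_incl; apply.
Qed.

Lemma mem_ev_nil x : ~ mem_ev x [::].
Proof. by case=> y []. Qed.

Lemma mem_ev_cons x y s : mem_ev x (y :: s) <-> ev_eq x y \/ mem_ev x s.
Proof.
split=> [[z [[<- | Hz] Exz]] | [Exy | [z [Hz Exz]]]]; first by left.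
- by right; exists z.
- by exists y; split; first left.
- by exists z; split; first right.
Qed.

Lemma mem_ev1 x y : mem_ev x [:: y] <-> ev_eq x y.
Proof.
rewrite mem_ev_cons; split; last by left.
by case=> // /mem_ev_nil.
Qed.

Lemma mem_ev_cat x s1 s2 : mem_ev x (s1 ++ s2) <-> mem_ev x s1 \/ mem_ev x s2.
Proof.
elim: s1 => [|y s1 IH] /=; first by split=> [|[/mem_ev_nil|]] //; right.
by rewrite !mem_ev_cons IH; tauto.
Qed.

Lemma same_set_remove a a' s u v : ev_eq a a' -> ~ mem_ev a s -> ~ mem_ev a' (u ++ v) ->
  same_set (a :: s) (u ++ a' :: v) -> same_set s (u ++ v).
Proof.
move=> Ea Na Na' /same_setP S; apply/same_setP => x; have := S x.
rewrite !mem_ev_cons !mem_ev_cat mem_ev_cons (ev_eq_transr x Ea).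
have Ns : mem_ev x s -> ~ ev_eq x a'.
  by move=> M Exa'; apply/Na/(mem_ev_eq _ M)/(ev_eq_trans Ea)/ev_eq_sym.
have Nuv : mem_ev x u \/ mem_ev x v -> ~ ev_eq x a'.
  by move=> /mem_ev_cat M Exa'; apply/Na'/(mem_ev_eq _ M); apply: ev_eq_sym.
tauto.
Qed.

Lemma ev_eq_hist a b : ev_eq a b -> same_set (hist a) (hist b).
Proof.
case/ev_eq_inv=> _ Iab Iba; split=> // y /Iba [x [Hx Exy]].
by exists x; split; last exact: ev_eq_sym.
Qed.

Lemma ev_eq_same_hist a b : label a = label b -> same_set (hist a) (hist b) -> ev_eq a b.
Proof.
move=> Lab [Iab Iba]; apply: ev_eq_intro => // y /Iba [x [Hx Eyx]].
by exists x; split; last exact: ev_eq_sym.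
Qed.

Lemma ev_lt_eq a a' b b' : ev_eq a a' -> ev_eq b b' -> ev_lt a b -> ev_lt a' b'.
Proof.
move=> Ea /ev_eq_hist[Ib _] Lab.
by apply: mem_ev_incl Ib; apply: mem_ev_eq Lab; apply: ev_eq_sym.
Qed.

Lemma ev_le_refl a : ev_le a a.
Proof. by left; apply: ev_eq_refl. Qed.

Lemma ev_le_eq a a' b b' : ev_eq a a' -> ev_eq b b' -> ev_le a b -> ev_le a' b'.
Proof.
move=> Ea Eb [Eab | Lab]; last by right; apply: ev_lt_eq Lab.
by left; apply: ev_eq_trans (ev_eq_trans Eab Eb); apply: ev_eq_sym.
Qed.

Lemma ev_lt_trans x y z : causally_closed (hist z) -> ev_lt x y -> ev_lt y z -> ev_lt x z.
Proof.
move=> CC Lxy [y' [Hy' Eyy']].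
exact: mem_ev_incl (ev_lt_eq (ev_eq_refl x) Eyy' Lxy) (CC _ Hy').
Qed.

Lemma ev_le_lt_trans x y z : causally_closed (hist z) -> ev_le x y -> ev_lt y z -> ev_lt x z.
Proof.
move=> CC [Exy | Lxy] Lyz; last exact: ev_lt_trans Lyz.
by apply: ev_lt_eq Lyz; [apply: ev_eq_sym | apply: ev_eq_refl].
Qed.

Fixpoint depth e : nat :=
  let: Ev _ H := e in (foldr (fun x m => maxn (depth x) m) 0 H).+1.

Lemma depth_hist_lt x f H : List.In x H -> depth x < depth (Ev f H).
Proof.
rewrite ltnS; elim: H => [|y H IH] //= [<- | /IH]; first exact: leq_maxl.
by move/leq_trans; apply; apply: leq_maxr.
Qed.

Lemma depth_Ev_le f H n : (forall x, List.In x H -> depth x <= n) -> depth (Ev f H) <= n.+1.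
Proof.
rewrite ltnS; elim: H => [|y H IH] //= Hn.
by rewrite geq_max Hn /=; [apply: IH => x Hx; apply: Hn; right | left].
Qed.

Lemma depth_eq a b : ev_eq a b -> depth a = depth b.
Proof.
elim/event_ind_nested: a b => f H IH [g H'] /ev_eq_hist[I I'].
apply/eqP; rewrite eqn_leq; apply/andP; split; apply: depth_Ev_le => x Hx.
- have [y [Hy Exy]] := I x Hx.
  by rewrite (IH x Hx y Exy) -ltnS; apply: depth_hist_lt.
- have [y [Hy Exy]] := I' x Hx.
  by rewrite -(IH y Hy x (ev_eq_sym Exy)) -ltnS; apply: depth_hist_lt.
Qed.

Lemma depth_lt a b : ev_lt a b -> depth a < depth b.
Proof. by case: b => f H [y [Hy /depth_eq ->]]; apply: depth_hist_lt. Qed.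

Lemma ev_lt_irrefl a : ~ ev_lt a a.
Proof. by move/depth_lt; rewrite ltnn. Qed.

End Events.

Section Linearizations.

Variable F : Type.
Implicit Types (a b w x y z : event F) (H s t u v pre q : list (event F)).

Lemma eqs_sym s t : List.Forall2 ev_eq s t -> List.Forall2 ev_eq t s.
Proof. by elim=> // x y {}s {}t /ev_eq_sym; constructor. Qed.

Lemma eqs_incl s t : List.Forall2 ev_eq s t -> incl_ev s t.
Proof.
elim=> [x [] | x y {}s {}t Exy _ I z [<- | /I Mz]]; first by exists y; split; first left.
by apply: mem_ev_incl Mz _ => w Hw; apply: mem_ev_In; right.
Qed.

Lemma eqs_same_set s t : List.Forall2 ev_eq s t -> same_set s t.
Proof. by move=> E; split; apply: eqs_incl; last apply: eqs_sym. Qed.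

Lemma eqs_label s t : List.Forall2 ev_eq s t -> map label s = map label t.
Proof. by elim=> //= x y {}s {}t /ev_eq_label -> _ ->. Qed.

Lemma eqs_rcons s t a b :
  List.Forall2 ev_eq s t -> ev_eq a b -> List.Forall2 ev_eq (rcons s a) (rcons t b).
Proof.
elim=> [|x y {}s {}t Exy _ IH] Eab /=; first by constructor; last constructor.
by constructor; last exact: IH.
Qed.

Lemma lin_ok_cat pre u v : lin_ok pre (u ++ v) <-> lin_ok pre u /\ lin_ok (pre ++ u) v.
Proof.
elim: u pre => [|x u IH] pre /=; first by rewrite cats0; tauto.
by rewrite IH -catA; tauto.
Qed.

Lemma lin_ok_rcons pre s e :
  lin_ok pre (rcons s e) <-> [/\ lin_ok pre s, ~ mem_ev e (pre ++ s) & incl_ev (hist e) (pre ++ s)].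
Proof. by rewrite -cats1 lin_ok_cat /=; split=> [[L [N [I _]]] | [L N I]]. Qed.

Lemma lin_ok_fresh pre s x : lin_ok pre s -> List.In x s -> ~ mem_ev x pre.
Proof.
elim: s pre => [|y s IH] pre //= [Ny [_ L]] [<- // | Hx] Mx.
by apply: IH L Hx _; rewrite mem_ev_cat; left.
Qed.

Lemma lin_ok_hist pre s x : lin_ok pre s -> List.In x s -> incl_ev (hist x) (pre ++ s).
Proof.
elim: s pre => [|y s IH] pre //= [_ [Iy L]] [<- | Hx].
- by apply: incl_ev_trans Iy _ => z Hz; apply: mem_ev_In; rewrite List.in_app_iff; left.
- by rewrite -cat_rcons -cats1; apply: IH.
Qed.

Lemma lin_ok_notin pre u a v : lin_ok pre (u ++ a :: v) -> ~ mem_ev a (pre ++ u ++ v).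
Proof.
case/lin_ok_cat=> _ /= [Na [_ Lv]]; rewrite catA mem_ev_cat => -[// | [y [Hy Eay]]].
by apply: lin_ok_fresh Lv Hy _; rewrite mem_ev_cat; right; apply/mem_ev1/ev_eq_sym.
Qed.

Lemma lin_ok_weak pre pre' u :
  lin_ok pre u -> incl_ev pre pre' -> (forall x, List.In x u -> ~ mem_ev x pre') ->
  lin_ok pre' u.
Proof.
elim: u pre pre' => [|x u IH] pre pre' //= [Nx [Ix L]] I N.
split; first by apply: N; left.
split; first exact: incl_ev_trans I.
apply: (IH _ _ L) => [y | y Hy].
- rewrite List.in_app_iff mem_ev_cat => -[/I | /mem_ev_In]; by [left | right].
- rewrite mem_ev_cat mem_ev1 => -[|Eyx]; first by apply: N; right.
  by apply: (lin_ok_fresh L Hy); rewrite mem_ev_cat mem_ev1; right.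
Qed.

Lemma lin_ok_same pre pre' u : lin_ok pre u -> same_set pre pre' -> lin_ok pre' u.
Proof.
move=> L [I I']; apply: (lin_ok_weak L I) => x Hx Mx.
exact: (lin_ok_fresh L Hx (mem_ev_incl Mx I')).
Qed.

Lemma lin_ok_drop pre q s :
  lin_ok (pre ++ q) s -> (forall y w, List.In y s -> mem_ev w (hist y) -> ~ mem_ev w q) ->
  lin_ok pre s.
Proof.
elim: s pre => [|y s IH] pre //= [Ny [Iy L]] Nq.
split; first by move=> My; apply: Ny; rewrite mem_ev_cat; left.
split.
- move=> w Hw; have := Iy w Hw; rewrite mem_ev_cat => -[// | Mq].
  by case: (Nq y w (or_introl erefl) (mem_ev_In Hw)).
- apply: IH => [|z w Hz]; last by apply: Nq; right.
  apply: lin_ok_same L _; apply/same_setP => w.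
  by rewrite !mem_ev_cat; tauto.
Qed.

Lemma lin_ok_eqs pre s t : lin_ok pre s -> List.Forall2 ev_eq s t -> lin_ok pre t.
Proof.
move=> L E; elim: E pre L => // x y {}s {}t Exy _ IH pre /= [Nx [Ix L]].
split; first by move=> My; apply: Nx; apply: mem_ev_eq My.
split; first by apply: incl_ev_trans Ix; case: (ev_eq_hist Exy) => _.
apply: IH; apply: lin_ok_same L _; apply/same_setP => w.
by rewrite !mem_ev_cat !mem_ev1 (ev_eq_transr w Exy).
Qed.

Lemma lin_ok_move_front pre u a' v a :
  lin_ok pre (u ++ a' :: v) -> ev_eq a a' -> lin_ok (pre ++ [:: a]) (u ++ v).
Proof.
move=> L Ea; have Na := lin_ok_notin L.
have /lin_ok_cat [Lu /= [_ [_ Lv]]] := L.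
apply/lin_ok_cat; split.
- apply: (lin_ok_weak Lu) => [x Hx | x Hx]; first by rewrite mem_ev_cat; left; apply: mem_ev_In.
  rewrite mem_ev_cat mem_ev1 => -[|Exa]; first exact: (lin_ok_fresh Lu Hx).
  apply: Na; rewrite !mem_ev_cat; right; left.
  by exists x; split; last exact: ev_eq_sym (ev_eq_trans Exa Ea).
- apply: lin_ok_same Lv _; apply/same_setP => x.
  by rewrite !mem_ev_cat !mem_ev1 (ev_eq_transr x Ea); tauto.
Qed.

Lemma lin_ok_concurrent pre u a' v a :
  lin_ok pre (u ++ a' :: v) -> ev_eq a a' -> incl_ev (hist a) pre ->
  forall y, List.In y u -> [/\ ~ ev_eq y a, ~ ev_lt y a & ~ ev_lt a y].
Proof.
move=> L Ea Ia y Hy.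
have Na : ~ mem_ev a (pre ++ u).
  move=> M; apply: (lin_ok_notin L); rewrite catA mem_ev_cat; left.
  by apply: mem_ev_eq M; apply: ev_eq_sym.
have /lin_ok_cat [Lu _] := L.
split=> [Eya | Lya | Lay].
- by apply: Na; rewrite mem_ev_cat; right; exists y; split; last exact: ev_eq_sym.
- by apply: (lin_ok_fresh Lu Hy); apply: mem_ev_incl Lya Ia.
- exact: Na (mem_ev_incl Lay (lin_ok_hist Lu Hy)).
Qed.

Lemma lin_ok_split (P : event F -> Prop) pre t :
  lin_ok pre t -> (forall x y, ev_eq x y -> P x -> P y) ->
  (forall x w, List.In x t -> P x -> mem_ev w (hist x) -> P w) ->
  exists s r, [/\ lin_ok pre s, lin_ok (pre ++ s) r,
    forall x, List.In x s <-> List.In x t /\ P x &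
    forall x, List.In x r <-> List.In x t /\ ~ P x].
Proof.
elim: t pre => [|x t IH] pre /=; first by exists [::], [::]; split=> // y; split=> // -[].
move=> [Nx [Ix L]] PE Pdown.
have [s [r [Ls Lr Hs Hr]]] := IH _ L PE (fun y w Hy => Pdown y w (or_intror Hy)).
case: (classic (P x)) => Px.
- exists (x :: s), r; split=> [//= | | y | y]; first by rewrite -catA in Lr.
  + by rewrite /= Hs; split=> [[<- | []] | [[<- | ]]]; tauto.
  + by rewrite Hr; split=> [[] | [[<- | ]]]; tauto.
- have Ns : ~ mem_ev x s by move=> [y [/Hs [_ Py] Exy]]; apply/Px/(PE y x (ev_eq_sym Exy)).
  exists s, (x :: r); split=> [| /= | y | y].
  + apply: (lin_ok_drop Ls) => y w /Hs [Hy Py] Mw /mem_ev1 Ewx.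
    exact/Px/(PE w x Ewx)/(Pdown y w (or_intror Hy) Py Mw).
  + split; first by rewrite mem_ev_cat => -[].
    split; first by apply: incl_ev_trans Ix _ => w Hw; rewrite mem_ev_cat; left; apply: mem_ev_In.
    apply: lin_ok_same Lr _; apply/same_setP => w; rewrite !mem_ev_cat; tauto.
  + by rewrite Hs; split=> [[] | [[<- | ]]]; tauto.
  + by rewrite /= Hr; split=> [[<- | []] | [[<- | ]]]; tauto.
Qed.

Lemma lin_ok_closed s : lin_ok [::] s -> causally_closed s.
Proof. by move=> L x; apply: lin_ok_hist L. Qed.

End Linearizations.

Section Conflicts.

Variables (F : Type) (indep : F -> F -> Prop).
Implicit Types (a b x y : event F) (L : list (event F)).

Lemma direct_conflict_eq a a' b b' :
  ev_eq a a' -> ev_eq b b' -> direct_conflict indep a b -> direct_conflict indep a' b'.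
Proof.
move=> Ea Eb [Nab [Nlab [Nlba Nind]]]; have [Ea' Eb'] := (ev_eq_sym Ea, ev_eq_sym Eb).
rewrite /direct_conflict.
split; first by move=> E; apply: Nab; apply: ev_eq_trans Ea (ev_eq_trans E Eb').
split; first by move=> Lt; apply: Nlab; apply: ev_lt_eq Lt.
split; first by move=> Lt; apply: Nlba; apply: ev_lt_eq Lt.
by rewrite -(ev_eq_label Ea) -(ev_eq_label Eb).
Qed.

Lemma conflict_free_direct L x y :
  conflict_free indep L -> mem_ev x L -> mem_ev y L -> ~ direct_conflict indep x y.
Proof.
move=> CF [x' [Hx Ex]] [y' [Hy Ey]] Dxy; apply: (CF x' y' Hx Hy).
exists x', y'; split; first exact: ev_le_refl.
by split; [exact: ev_le_refl | exact: direct_conflict_eq Ex Ey Dxy].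
Qed.

Lemma conflict_freeP L : causally_closed L ->
  (forall a b, List.In a L -> List.In b L -> ~ direct_conflict indep a b) ->
  conflict_free indep L.
Proof.
move=> CC N e1 e2 H1 H2 [a [b [Ha [Hb Dab]]]].
have below e c : List.In e L -> ev_le c e -> mem_ev c L.
  by move=> He [Ece | Lce]; [exists e | apply: mem_ev_incl Lce (CC e He)].
have [[a' [Ha' Ea]] [b' [Hb' Eb]]] := (below _ _ H1 Ha, below _ _ H2 Hb).
exact: N Ha' Hb' (direct_conflict_eq Ea Eb Dab).
Qed.

Lemma concurrent_indep L x y : conflict_free indep L -> mem_ev x L -> mem_ev y L ->
  ~ ev_eq x y -> ~ ev_lt x y -> ~ ev_lt y x -> indep (label x) (label y).
Proof.
move=> CF Mx My N1 N2 N3; apply: NNPP => N4.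
exact: (conflict_free_direct CF Mx My).
Qed.

End Conflicts.

Section States.

Variables (disp : Order.disp_t) (D : bLatticeType disp) (F : Type).
Variables (app : F -> D -> D) (d0 : D) (indep : F -> F -> Prop).
Hypothesis Hstrict : bottom_strict app.
Hypothesis Hindep : weak_independence app d0 indep.

Local Notation state := (state app d0).

Lemma state_cat s1 s2 : state (s1 ++ s2) = foldl (fun d f => app f d) (state s1) s2.
Proof. exact: foldl_cat. Qed.

Lemma state_rcons s f : state (rcons s f) = app f (state s).
Proof. by rewrite -cats1 state_cat. Qed.

Lemma state_cat_bot s1 s2 : state s1 = \bot%O -> state (s1 ++ s2) = \bot%O.
Proof. by rewrite state_cat => ->; elim: s2 => //= f s2; rewrite Hstrict. Qed.

Lemma state_swap rho g h tau :
  indep g h -> state (rho ++ g :: h :: tau) = state (rho ++ h :: g :: tau).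
Proof.
move=> Igh; rewrite !state_cat /=; congr foldl.
case: (classic (state rho = \bot%O)) => [-> | Nbot]; first by rewrite !Hstrict.
by case: Hindep => _ [_ Hcomm]; apply: esym; apply: Hcomm => //; exists rho.
Qed.

Lemma state_move rho us f tau : (forall g, List.In g us -> indep g f) ->
  state (rho ++ us ++ f :: tau) = state (rho ++ f :: us ++ tau).
Proof.
elim: us rho => [|g us IH] rho //= Hus.
rewrite -cat_rcons IH => [|h Hh]; last by apply: Hus; right.
by rewrite cat_rcons; apply: state_swap; apply: Hus; left.
Qed.

Lemma lin_ok_state L : conflict_free indep L ->
  forall s1 s2 pre rho, lin_ok pre s1 -> lin_ok pre s2 -> same_set s1 s2 -> incl_ev s1 L ->
  state (rho ++ map label s1) = state (rho ++ map label s2).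
Proof.
move=> CF; elim=> [|a s1 IH] s2 pre rho L1 L2 S12 I1.
  by case: s2 S12 {L2} => // b s2 [_ /(_ b (or_introl erefl))] /mem_ev_nil.
have [a' [Ha' Ea]] := S12.1 a (or_introl erefl).
have [u [v Es2]] : exists u v, s2 = u ++ a' :: v := List.in_split _ _ Ha'.
subst s2; have [_ [Ia L1']] := L1.
have Ind : forall g, List.In g (map label u) -> indep g (label a).
  move=> g /List.in_map_iff [y [<- Hy]].
  have [N1 N2 N3] := lin_ok_concurrent L2 Ea Ia Hy.
  apply: (concurrent_indep CF) N1 N2 N3; last by apply: I1; left.
  by apply: (mem_ev_incl _ I1); apply: S12.2; rewrite List.in_app_iff; left.
rewrite map_cat /= -(ev_eq_label Ea) state_move // -!cat_rcons -map_cat.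
apply: (IH _ (pre ++ [:: a])) => //; first exact: lin_ok_move_front L2 Ea.
- apply: same_set_remove Ea _ _ S12 => M.
  + by apply: (lin_ok_notin (u := [::]) L1); rewrite mem_ev_cat; right.
  + by apply: (lin_ok_notin L2); rewrite mem_ev_cat; right.
- by move=> x Hx; apply: I1; right.
Qed.

Lemma is_state_conf_lin C s : conflict_free indep C -> lin_ok [::] s -> same_set s C ->
  is_state_conf app d0 C (state (map label s)).
Proof.
move=> CF Ls Ss.
have E sigma : inter C sigma -> state sigma = state (map label s).
  move=> [s' [Ls' [Ss' <-]]].
  exact: (lin_ok_state CF [::] Ls' Ls (same_set_trans Ss' (same_set_sym Ss)) Ss'.1).
split=> [_ [sigma [Isigma ->]] | z Hz]; first by rewrite E.
by apply: Hz; exists (map label s); split=> //; exists s.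
Qed.

End States.

Section Unfolding.

Variables (disp : Order.disp_t) (D : bLatticeType disp) (F : Type).
Variables (app : F -> D -> D) (d0 : D) (indep : F -> F -> Prop).
Implicit Types (a b e p w x y z : event F) (s t u C P : list (event F)).

Local Notation unf := (in_unf app d0 indep).
Local Notation configuration := (configuration app d0 indep).

Lemma in_unf_inv e : unf e ->
  [/\ forall x, List.In x (hist e) -> unf x, causally_closed (hist e) &
      forall x, List.In x (hist e) -> maximal_in x (hist e) -> ~ indep (label e) (label x)].
Proof. by case. Qed.

Lemma maximal_above C x : (forall y, List.In y C -> unf y) -> List.In x C ->
  exists2 m, List.In m C & ev_le x m /\ maximal_in m C.
Proof.
move=> UC Hx.
have [m [Hm Lxm] Mm] := exists_max_measure (@depth F) (Q := ev_le x) Hx (ev_le_refl x).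
exists m => //; split=> // -[m' [Hm' Lmm']].
have [_ CC _] := in_unf_inv (UC m' Hm').
by move: (Mm m' Hm' (or_intror (ev_le_lt_trans CC Lxm Lmm'))); rewrite leqNgt depth_lt.
Qed.

(* In a configuration, the history of an event labelled [f] that follows a
   linearization [P] consists exactly of the [dep_past f P] events of [P]. *)
Definition dep_past (f : F) P x : Prop :=
  exists2 z, List.In z P & ~ indep f (label z) /\ ev_le x z.

Lemma dep_past_eq f P x y : ev_eq x y -> dep_past f P x -> dep_past f P y.
Proof.
move=> Exy [z Hz [Nz Lxz]]; exists z => //; split=> //.
by apply: ev_le_eq Lxz => //; apply: ev_eq_refl.
Qed.

Lemma dep_past_eqs f P1 P2 x : List.Forall2 ev_eq P1 P2 -> dep_past f P1 x -> dep_past f P2 x.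
Proof.
move=> E [z /(eqs_incl E) [z' [Hz' Ezz']] [Nz Lxz]]; exists z' => //.
by rewrite -(ev_eq_label Ezz'); split=> //; apply: ev_le_eq Lxz; [apply: ev_eq_refl|].
Qed.

Lemma dep_past_down f P x w : (forall z, List.In z P -> unf z) ->
  dep_past f P x -> mem_ev w (hist x) -> dep_past f P w.
Proof.
move=> UP [z Hz [Nz Lxz]] Mw; exists z => //; split=> //; right.
have [_ CC _] := in_unf_inv (UP z Hz).
case: Lxz => [Exz | Lxz]; first by apply: ev_lt_eq Mw => //; apply: ev_eq_refl.
exact: ev_lt_trans CC Mw Lxz.
Qed.

Lemma hist_dep_past P e : unf e -> lin_ok [::] (rcons P e) ->
  forall x, List.In x (hist e) -> exists2 p, List.In p P & ev_eq x p /\ dep_past (label e) P p.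
Proof.
move=> Ue /lin_ok_rcons [_ _ Ie] x Hx; have [Uh _ Dmax] := in_unf_inv Ue.
have [m Hm [Lxm Mm]] := maximal_above Uh Hx.
have [[p [Hp Exp]] [z [Hz Emz]]] := (Ie x Hx, Ie m Hm).
exists p => //; split=> //; exists z => //; split.
- by rewrite -(ev_eq_label Emz); apply: Dmax.
- exact: ev_le_eq Exp Emz Lxm.
Qed.

Lemma dep_past_hist C P e : conflict_free indep C -> (forall y, List.In y P -> List.In y C) ->
  List.In e C -> unf e -> lin_ok [::] (rcons P e) ->
  forall p, dep_past (label e) P p -> mem_ev p (hist e).
Proof.
move=> CF PC He Ue /lin_ok_rcons [LP Ne _] p [z Hz [Nz Lpz]].
have [_ CC _] := in_unf_inv Ue; apply: (ev_le_lt_trans CC Lpz).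
apply: NNPP => Nlt; apply: (conflict_free_direct CF (mem_ev_In He) (mem_ev_In (PC z Hz))).
split; first by move=> Eez; apply: Ne; exists z.
split; first by move=> Lez; apply: Ne; apply: mem_ev_incl Lez (lin_ok_hist LP Hz).
by [].
Qed.

Lemma hist_incl_eqs C2 P1 P2 e1 e2 :
  List.Forall2 ev_eq P1 P2 -> label e1 = label e2 ->
  unf e1 -> lin_ok [::] (rcons P1 e1) ->
  conflict_free indep C2 -> (forall y, List.In y P2 -> List.In y C2) -> List.In e2 C2 ->
  unf e2 -> lin_ok [::] (rcons P2 e2) ->
  incl_ev (hist e1) (hist e2).
Proof.
move=> E12 Lab U1 L1 CF2 P2C He2 U2 L2 x /(hist_dep_past U1 L1) [p _ [Exp Dp]].
apply: mem_ev_eq Exp _; apply: (dep_past_hist CF2 P2C He2 U2 L2).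
by rewrite -Lab; apply: dep_past_eqs E12 Dp.
Qed.

Lemma configuration_lin_eqs C1 C2 t1 t2 : configuration C1 -> configuration C2 ->
  (forall x, List.In x t1 -> List.In x C1) -> (forall x, List.In x t2 -> List.In x C2) ->
  lin_ok [::] t1 -> lin_ok [::] t2 -> map label t1 = map label t2 ->
  List.Forall2 ev_eq t1 t2.
Proof.
move=> [U1 [_ CF1]] [U2 [_ CF2]]; elim/last_ind: t1 t2 => [|P1 e1 IH] t2.
  by case: t2 => // *; constructor.
case/lastP: t2 => [|P2 e2] H1 H2 L1 L2; rewrite !map_rcons ?size_rcons //.
  by move/(congr1 size); rewrite size_rcons.
move/rcons_inj => [Lab1 Lab].
have In_rcons s y z : List.In y s -> List.In y (rcons s z).
  by rewrite -cats1 List.in_app_iff; left.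
have E12 : List.Forall2 ev_eq P1 P2.
  apply: IH Lab1; [move=> x Hx | move=> x Hx | case/lin_ok_rcons: L1 | case/lin_ok_rcons: L2] => //.
  - exact/H1/In_rcons.
  - exact/H2/In_rcons.
have [He1 He2] : List.In e1 C1 /\ List.In e2 C2.
  by split; [apply: H1 | apply: H2]; rewrite -cats1 List.in_app_iff; right; left.
have P1C x : List.In x P1 -> List.In x C1 by move=> /In_rcons/H1.
have P2C x : List.In x P2 -> List.In x C2 by move=> /In_rcons/H2.
apply: eqs_rcons => //; apply: ev_eq_same_hist => //; split.
- exact: hist_incl_eqs E12 Lab (U1 _ He1) L1 CF2 P2C He2 (U2 _ He2) L2.
- exact: hist_incl_eqs (eqs_sym E12) (esym Lab) (U2 _ He2) L2 CF1 P1C He1 (U1 _ He1) L1.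
Qed.

Lemma inter_lin C sigma : inter C sigma ->
  exists t, [/\ lin_ok [::] t, same_set t C, map label t = sigma &
                forall x, List.In x t -> List.In x C].
Proof.
move=> [s [Ls [[I I'] <-]]].
have [t [E tC]] : exists t, List.Forall2 ev_eq s t /\ List.incl t C.
  apply: List.Forall_Exists_exists_Forall2; apply/List.Forall_forall => x /I [y [Hy Exy]].
  by apply/List.Exists_exists; exists y.
exists t; split => //; [exact: lin_ok_eqs E | | exact: esym (eqs_label E)].
exact: same_set_trans (same_set_sym (eqs_same_set E)) (conj I I').
Qed.

Hypothesis Hstrict : bottom_strict app.
Hypothesis Hindep : weak_independence app d0 indep.

Section Extension.

Variables (t : list (event F)) (f : F).
Hypothesis Ct : configuration t.
Hypothesis Lt : lin_ok [::] t.
Hypothesis Hrun : is_run app d0 (rcons (map label t) f).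
Variables s r : list (event F).
Hypothesis Ls : lin_ok [::] s.
Hypothesis Lr : lin_ok s r.
Hypothesis Hs : forall x, List.In x s <-> List.In x t /\ dep_past f t x.
Hypothesis Hr : forall x, List.In x r <-> List.In x t /\ ~ dep_past f t x.

Lemma dep_past_enabled : app f (state app d0 (map label s)) <> \bot%O.
Proof.
have [Hsym _] := Hindep; have [_ [_ CFt]] := Ct.
have Str : same_set t (s ++ r).
  split=> x Hx; apply: mem_ev_In; move: Hx; rewrite List.in_app_iff.
  - by case: (classic (dep_past f t x)) => Dx Hx; [left; apply/Hs | right; apply/Hr].
  - by case=> [/Hs [] | /Hr []].
have Ind g : List.In g (map label r) -> indep g f.
  move=> /List.in_map_iff [y [<- /Hr [Hy Ny]]]; apply: NNPP => N; apply: Ny.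
  by exists y => //; split; [move/Hsym | exact: ev_le_refl].
have Lsr : lin_ok [::] (s ++ r) by apply/lin_ok_cat.
move=> Ebot; apply: Hrun.
have := lin_ok_state Hstrict Hindep CFt [::] Lt Lsr Str (same_set_refl t).1.
rewrite /= state_rcons => ->; rewrite -state_rcons map_cat -cats1 -catA.
rewrite (state_move Hstrict Hindep (map label s) [::] Ind) -cat_rcons.
by apply: state_cat_bot => //; rewrite state_rcons.
Qed.

Lemma dep_lt_extension y : List.In y t -> ~ indep f (label y) -> ev_lt y (Ev f s).
Proof.
by move=> Hy Ny; apply/mem_ev_In/Hs; split=> //; exists y => //; split=> //; apply: ev_le_refl.
Qed.

Lemma in_unf_extension : unf (Ev f s).
Proof.
have [Ut [_ CFt]] := Ct.
have CFs : conflict_free indep s by move=> e1 e2 /Hs [H1 _] /Hs [H2 _]; apply: CFt.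
constructor=> //.
- by move=> x /Hs [/Ut].
- move=> x /Hs [Hx Dx] w Hw; have [w' [Hw' Eww']] := lin_ok_hist Lt Hx Hw.
  exists w'; split=> //; apply/Hs; split=> //.
  exact: dep_past_eq Eww' (dep_past_down Ut Dx (mem_ev_In Hw)).
- exists (state app d0 (map label s)); split; last exact: dep_past_enabled.
  apply: (is_state_conf_lin Hstrict Hindep CFs Ls (same_set_refl s)).
- move=> x /Hs [Hx [z Hz [Nz [Exz | Lxz]]]] Mx; first by rewrite (ev_eq_label Exz).
  case: Mx; exists z; split=> //; apply/Hs; split=> //.
  by exists z => //; split=> //; apply: ev_le_refl.
Qed.

Lemma lin_ok_extension : lin_ok [::] (rcons t (Ev f s)).
Proof.
have [_ [Hirr _]] := Hindep.
apply/lin_ok_rcons; split=> //; last by move=> x /Hs [Hx _]; apply: mem_ev_In.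
move=> [y [Hy Eey]]; apply: (@ev_lt_irrefl _ (Ev f s)).
apply: ev_lt_eq (dep_lt_extension Hy _); [exact: ev_eq_sym | exact: ev_eq_refl |].
by rewrite -(ev_eq_label Eey); apply: Hirr.
Qed.

Lemma configuration_extension : configuration (rcons t (Ev f s)).
Proof.
have [Hsym _] := Hindep; have [Ut [_ CFt]] := Ct.
have CC := lin_ok_closed lin_ok_extension.
split; [|split=> //].
  by move=> x; rewrite -cats1 List.in_app_iff => -[/Ut // | [<- | []]]; apply: in_unf_extension.
apply: conflict_freeP CC _ => a b; rewrite -!cats1 !List.in_app_iff.
case=> [Ha | [<- | []]] [Hb | [<- | []]].
- exact: conflict_free_direct CFt (mem_ev_In Ha) (mem_ev_In Hb).
- by move=> [_ [Nlt [_ Nind]]]; apply/Nlt/dep_lt_extension => // /Hsym.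
- by move=> [_ [_ [Nlt Nind]]]; apply/Nlt/dep_lt_extension.
- by move=> [N _]; apply/N/ev_eq_refl.
Qed.

End Extension.

Lemma run_configuration sigma : is_run app d0 sigma ->
  exists t, [/\ configuration t, lin_ok [::] t & map label t = sigma].
Proof.
elim/last_ind: sigma => [|sigma f IH] Hrun.
  by exists [::]; split=> //; split; [|split] => // e1 e2 [].
have [t [Ct Lt Et]] : exists t, [/\ configuration t, lin_ok [::] t & map label t = sigma].
  by apply: IH => E; apply: Hrun; rewrite state_rcons E Hstrict.
subst sigma; have [Ut _] := Ct.
have [s [r [Ls Lr Hs Hr]]] :=
  lin_ok_split Lt (@dep_past_eq f t) (fun x w _ => @dep_past_down f t x w Ut).
exists (rcons t (Ev f s)); split; last by rewrite map_rcons.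
- by apply: (configuration_extension Ct Lt Hrun Ls Lr Hs Hr).
- by apply: (lin_ok_extension Lt Hs).
Qed.

End Unfolding.

Unset Implicit Arguments.

Theorem theorem2 (disp : Order.disp_t) (D : bLatticeType disp) (F : Type)
  (app : F -> D -> D) (d0 : D)
  (Hmono : monotone_transformers app) (Hstrict : bottom_strict app)
  (indep : F -> F -> Prop) (Hindep : weak_independence app d0 indep)
  (sigma : seq F) (Hrun : is_run app d0 sigma) :
  exists C : list (event F),
    configuration app d0 indep C /\ inter C sigma /\
    (forall C', configuration app d0 indep C' -> inter C' sigma -> same_set C C').
Proof.
have [t [Ct Lt Et]] := run_configuration Hstrict Hindep Hrun.
exists t; split=> //; split; first by exists t; split=> //; split=> //; apply: same_set_refl.
move=> C' Ct' /inter_lin [t' [Lt' St' Et' Ht']].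
apply: same_set_trans St'; apply: eqs_same_set.
by apply: configuration_lin_eqs Ct Ct' _ Ht' Lt Lt' _ => //; rewrite Et Et'.
Qed.
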